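(* Let $H$ be a real or complex Hilbert space of dimension $n$, let $N\ge n$, let $F=\{f_i\}_{i=1}^N$ be a frame for $H$ and let $G=\{g_i\}_{i=1}^N$ be a dual frame of $F$. Let $\{q_i\}_{i=1}^N$ be the weight number sequence defined below. Then $$\mathcal{R}_1^p(F,G)=\max\{\,q_i\,|\langle f_i,g_i\rangle| : 1\le i\le N\,\}.$$
   Context: Inner products are linear in the first argument. A frame for the $n$-dimensional space $H$ is a finite sequence spanning $H$. Its analysis operator is $\Theta_F f=(\langle f,f_i\rangle)_{i=1}^N$ and its synthesis operator is $\Theta_F^*(c)=\sum_i c_if_i$. A dual frame of $F$ is a frame $G=\{g_i\}_{i=1}^N$ with $f=\sum_i\langle f,f_i\rangle g_i=\sum_i\langle f,g_i\rangle f_i$ for all $f\in H$. A probability sequence $\{p_i\}_{i=1}^N$ satisfies $0\le p_i\le 1$ and $\sum_i p_i=1$. The weight numbers are $q_i=\frac{\sum_{j=1}^N p_j}{\sum_{j=1}^N p_j-p_i}\cdot\frac{N-1}{n}$ (assumed well defined). For $1\le m\le N$, $\mathcal{D}_m^p$ is the set of $N\times N$ diagonal matrices $D$ for which there is $\Lambda\subseteq\{1,\dots,N\}$ with $|\Lambda|=m$, $D_{ii}=q_i$ for $i\in\Lambda$ and $D_{ii}=0$ otherwise. Thus $\Theta_G^*D\Theta_F f=\sum_{i\in\Lambda}q_i\langle f,f_i\rangle g_i$. Finally $\mathcal{R}_m^p(F,G)=\max\{\rho(\Theta_G^*D\Theta_F): D\in\mathcal{D}_m^p\}$, where $\rho$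 denotes spectral radius. *)

From HB Require Import structures.
From mathcomp Require Import all_boot all_order all_algebra.
Set Implicit Arguments. Unset Strict Implicit. Unset Printing Implicit Defensive.
Import Order.TTheory GRing.Theory Num.Theory.
Local Open Scope ring_scope.

(* Ambient scalars: C is an algebraically closed numeric field (e.g. complex
   numbers); vectors of the n-dimensional space H are row vectors 'rV[C]_n.
   The real case is modelled by vectors with real entries. *)

Section FrameDefs.
Variables (C : numClosedFieldType) (n N : nat).

Definition inner (x y : 'rV[C]_n) : C := \sum_(k < n) x 0 k * (y 0 k)^*.

Definition realvec (x : 'rV[C]_n) : bool := [forall k, x 0 k \is Num.real].

Definition is_frame (F : 'I_N -> 'rV[C]_n) : Prop :=
  forall f : 'rV[C]_n, exists c : 'I_N -> C, f = \sum_(i < N) c i *: F i.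

Definition is_real_frame (F : 'I_N -> 'rV[C]_n) : Prop :=
  (forall i, realvec (F i)) /\
  forall f : 'rV[C]_n, realvec f ->
    exists c : 'I_N -> C, (forall i, c i \is Num.real) /\
      f = \sum_(i < N) c i *: F i.

Definition dual_identities (F G : 'I_N -> 'rV[C]_n) (f : 'rV[C]_n) : Prop :=
  f = \sum_(i < N) inner f (F i) *: G i /\
  f = \sum_(i < N) inner f (G i) *: F i.

Definition is_dual_frame (F G : 'I_N -> 'rV[C]_n) : Prop :=
  is_frame G /\ forall f, dual_identities F G f.

Definition is_real_dual_frame (F G : 'I_N -> 'rV[C]_n) : Prop :=
  is_real_frame G /\ forall f, realvec f -> dual_identities F G f.

Definition is_prob_seq (p : 'I_N -> C) : Prop :=
  (forall i, 0 <= p i <= 1) /\ \sum_(i < N) p i = 1.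

Definition weight (p : 'I_N -> C) (i : 'I_N) : C :=
  (\sum_(j < N) p j) / (\sum_(j < N) p j - p i) * ((N.-1)%:R / n%:R).

Definition weight_well_defined (p : 'I_N -> C) : Prop :=
  (0 < n)%N /\ forall i, \sum_(j < N) p j - p i != 0.

(* the operator Theta_G^* D Theta_F for D in D_m^p with support L *)
Definition GDF (q : 'I_N -> C) (F G : 'I_N -> 'rV[C]_n) (L : {set 'I_N})
  (f : 'rV[C]_n) : 'rV[C]_n :=
  \sum_(i in L) (q i * inner f (F i)) *: G i.

End FrameDefs.

(* eigenvalues (with multiplicity) of a square matrix over a closed field:
   the roots of its characteristic polynomial *)
Definition eigvals (C : numClosedFieldType) (d : nat) (A : 'M[C]_d) : seq C :=
  sval (closed_field_poly_normal (char_poly A)).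

Definition spectral_radius (C : numClosedFieldType) (d : nat) (A : 'M[C]_d) : C :=
  \big[Num.max/0]_(z <- eigvals A) `|z|.

Definition op_spectral_radius (C : numClosedFieldType) (n : nat)
  (T : 'rV[C]_n -> 'rV[C]_n) : C := spectral_radius (lin1_mx T).

Definition Rmp (C : numClosedFieldType) (n N m : nat) (p : 'I_N -> C)
  (F G : 'I_N -> 'rV[C]_n) : C :=
  \big[Num.max/0]_(L : {set 'I_N} | #|L| == m)
     op_spectral_radius (GDF (weight n p) F G L).

From HB Require Import structures.
From mathcomp Require Import all_boot all_order all_algebra.
Import Order.TTheory GRing.Theory Num.Theory.
Local Open Scope ring_scope.

(* For m = 1 the matrix D has a single nonzero entry q_i, so Theta_G^* D Theta_F
   is the rank-one map f |-> q_i <f, f_i> g_i.  A rank-one map u^T v has no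
   nonzero eigenvalue other than v u^T, here q_i <g_i, f_i>, so its spectral
   radius is q_i |<f_i, g_i>|, and R_1^p is the largest of these numbers. *)

Section NonnegBigmax.
Variable R : numDomainType.

Lemma nneg_comparable (x y : R) : 0 <= x -> 0 <= y -> x >=< y.
Proof. by move=> /ger0_real x_real /ger0_real y_real; apply: real_comparable. Qed.

Variables (I : eqType) (P : pred I) (F : I -> R).
Hypothesis F_ge0 : forall i, P i -> 0 <= F i.

Lemma bigmax_ge0 (r : seq I) : 0 <= \big[Num.max/0]_(i <- r | P i) F i.
Proof.
elim/big_ind: _ => // x y x_ge0 y_ge0.
by rewrite comparable_le_max ?x_ge0 ?nneg_comparable.
Qed.

Lemma le_bigmax_nneg (r : seq I) j :
  j \in r -> P j -> F j <= \big[Num.max/0]_(i <- r | P i) F i.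
Proof.
elim: r => // a s IHs; rewrite in_cons big_cons => /predU1P[-> | j_s] Pj.
  by rewrite Pj comparable_le_max ?lexx ?nneg_comparable ?F_ge0 ?bigmax_ge0.
case: ifP => Pa; last exact: IHs.
by rewrite comparable_le_max ?IHs ?orbT ?nneg_comparable ?F_ge0 ?bigmax_ge0.
Qed.

End NonnegBigmax.

Lemma bigmax_card1 (R : numDomainType) (T : finType) (f : {set T} -> R) :
  (forall L, 0 <= f L) ->
  \big[Num.max/0]_(L : {set T} | #|L| == 1%N) f L = \big[Num.max/0]_(i : T) f [set i].
Proof.
move=> f_ge0; apply/le_anti/andP; split.
  apply: bigmax_le => [|_ /cards1P[i ->]]; first exact: bigmax_ge0.
  by apply: le_bigmax_nneg; rewrite ?mem_index_enum.
apply: bigmax_le => [|i _]; first exact: bigmax_ge0.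
by apply: le_bigmax_nneg; rewrite ?mem_index_enum ?cards1.
Qed.

Section RankOne.
Variables (K : fieldType) (d : nat) (u v : 'rV[K]_d).

Lemma mulmx_rank1 (x : 'rV[K]_d) : x *m (u^T *m v) = (x *m u^T) 0 0 *: v.
Proof. by rewrite mulmxA {1}[x *m u^T]mx11_scalar mul_scalar_mx. Qed.

(* An eigenvector x for z != 0 is a multiple of v, which forces z = v u^T. *)
Lemma eigenvalue_rank1 z : eigenvalue (u^T *m v) z -> z = 0 \/ z = (v *m u^T) 0 0.
Proof.
case/eigenvalueP => x; rewrite mulmx_rank1 => x_eig x_neq0.
have [-> | z_neq0] := eqVneq z 0; [by left | right].
set c := (x *m u^T) 0 0 in x_eig.
have x_def : x = (z^-1 * c) *: v by rewrite -scalerA x_eig scalerA mulVf ?scale1r.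
have c_neq0 : c != 0 by apply: contraNneq x_neq0 => c0; rewrite x_def c0 mulr0 scale0r.
have c_def : c = z^-1 * c * (v *m u^T) 0 0 by rewrite {1}/c {1}x_def -scalemxAl mxE.
by apply: (mulfI c_neq0); rewrite {1}c_def mulrC !mulrA mulfV // mul1r.
Qed.

End RankOne.

Section SpectralRadius.
Variable C : numClosedFieldType.

Lemma spectral_radius_ge0 d (A : 'M[C]_d) : 0 <= spectral_radius A.
Proof. by apply: bigmax_ge0 => z _; apply: normr_ge0. Qed.

Lemma mem_eigvals d (A : 'M[C]_d) z : (z \in eigvals A) = eigenvalue A z.
Proof.
rewrite eigenvalue_root_char /eigvals; case: closed_field_poly_normal => s /= ->.
by rewrite (monicP (char_poly_monic A)) scale1r root_prod_XsubC.
Qed.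

Lemma spectral_radius_rank1 d (u v : 'rV[C]_d) :
  spectral_radius (u^T *m v) = `|(v *m u^T) 0 0|.
Proof.
apply/le_anti/andP; split.
  rewrite /spectral_radius big_seq; apply: bigmax_le => // z.
  by rewrite mem_eigvals => /eigenvalue_rank1[] ->; rewrite ?normr0.
have [-> | t_neq0] := eqVneq ((v *m u^T) 0 0) 0; first by rewrite normr0 spectral_radius_ge0.
apply: (@le_bigmax_nneg _ _ xpredT Num.norm) => //; rewrite mem_eigvals.
apply/eigenvalueP; exists v; first by rewrite mulmx_rank1.
by apply: contraNneq t_neq0 => ->; rewrite mul0mx mxE.
Qed.

End SpectralRadius.

Section SingletonSupport.
Variables (C : numClosedFieldType) (n N : nat) (q : 'I_N -> C).
Variables (F G : 'I_N -> 'rV[C]_n) (i : 'I_N).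

Let conj_row (x : 'rV[C]_n) : 'rV[C]_n := map_mx Num.conj x.

Lemma GDF1_mulmx (f : 'rV[C]_n) :
  GDF q F G [set i] f = f *m ((q i *: conj_row (F i))^T *m G i).
Proof.
rewrite /GDF big_set1 mulmxA {1}[f *m _]mx11_scalar mul_scalar_mx; congr (_ *: _).
rewrite !mxE /inner mulr_sumr; apply: eq_bigr => k _.
by rewrite !mxE mulrCA.
Qed.

Lemma op_spectral_radius_GDF1 :
  op_spectral_radius (GDF q F G [set i]) = `|q i| * `|inner (F i) (G i)|.
Proof.
rewrite /op_spectral_radius.
have -> : lin1_mx (GDF q F G [set i]) = (q i *: conj_row (F i))^T *m G i.
  by apply/matrixP => a b; rewrite mxE GDF1_mulmx -rowE mxE.
rewrite spectral_radius_rank1 -(norm_conjC (inner _ _)) -normrM; congr `|_|.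
rewrite mxE /inner rmorph_sum mulr_sumr; apply: eq_bigr => k _.
by rewrite !mxE rmorphM /= conjCK mulrCA [G i 0 k * _]mulrC.
Qed.

End SingletonSupport.

Lemma Rmp1_nneg_weight (C : numClosedFieldType) n N (F G : 'I_N -> 'rV[C]_n)
    (p : 'I_N -> C) :
  (forall i, 0 <= weight n p i) ->
  Rmp 1 p F G = \big[Num.max/0]_(i < N) (weight n p i * `|inner (F i) (G i)|).
Proof.
move=> weight_ge0; rewrite /Rmp bigmax_card1 => [|L]; last exact: spectral_radius_ge0.
by apply: eq_bigr => i _; rewrite op_spectral_radius_GDF1 ger0_norm.
Qed.

Lemma weight_ge0 (C : numClosedFieldType) n N (p : 'I_N -> C) i :
  is_prob_seq p -> weight_well_defined n p -> 0 <= weight n p i.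
Proof.
case=> p_range sum_p1 [_ denom_neq0]; rewrite /weight sum_p1.
have /andP[_ p_le1] := p_range i.
have denom_gt0 : 0 < 1 - p i by rewrite lt0r -sum_p1 denom_neq0 sum_p1 subr_ge0.
by rewrite mulr_ge0 ?divr_ge0 ?ler01 ?ler0n ?ltW.
Qed.

Theorem proposition3p1 :
  (* complex Hilbert space C^n *)
  (forall (C : numClosedFieldType) (n N : nat) (F G : 'I_N -> 'rV[C]_n)
      (p : 'I_N -> C),
    (n <= N)%N -> is_frame F -> is_dual_frame F G ->
    is_prob_seq p -> weight_well_defined n p ->
    Rmp 1 p F G = \big[Num.max/0]_(i < N) (weight n p i * `|inner (F i) (G i)|))
  /\
  (* real Hilbert space R^n (vectors with real entries) *)
  (forall (C : numClosedFieldType) (n N : nat) (F G : 'I_N -> 'rV[C]_n)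
      (p : 'I_N -> C),
    (n <= N)%N -> is_real_frame F -> is_real_dual_frame F G ->
    is_prob_seq p -> weight_well_defined n p ->
    Rmp 1 p F G = \big[Num.max/0]_(i < N) (weight n p i * `|inner (F i) (G i)|)).
Proof.
by split=> C n N F G p _ _ _ p_prob p_wd; apply: Rmp1_nneg_weight => i; apply: weight_ge0.
Qed.
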